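(* Let $f:\mathbb R\to\mathbb R$ be a Jones function and let $\varphi:\mathbb R\to\mathbb R$ be continuous and surjective. Then $\varphi\circ f$ is a Jones function.
   Context: A function $f:\mathbb R\to\mathbb R$ (identified with its graph in $\mathbb R^2$) is a Jones function if for every closed set $K\subset\mathbb R^2$ whose projection onto the $x$-axis, $\{x:\exists y,\ (x,y)\in K\}$, is uncountable, the graph of $f$ meets $K$. *)

From HB Require Import structures.
From mathcomp Require Import all_boot all_order all_algebra.
From mathcomp Require Import all_classical all_reals all_analysis.
Import numFieldNormedType.Exports.
Local Open Scope classical_set_scope.

Definition graph {R : realType} (f : R -> R) : set (R * R) :=
  [set p | p.2 = f p.1].

Definition xproj {R : realType} (K : set (R * R)) : set R :=
  [set x | exists y, K (x, y)].

Definition Jones {R : realType} (f : R -> R) : Prop :=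
  forall K : set (R * R), closed K -> ~ countable (xproj K) ->
    graph f `&` K !=set0.

From HB Require Import structures.
From mathcomp Require Import all_boot all_order all_algebra.
From mathcomp Require Import all_classical all_reals all_analysis.
Import numFieldNormedType.Exports.
Local Open Scope classical_set_scope.

(* Pull K back along (x, y) |-> (x, phi y): the preimage is closed by
   continuity, has the same x-projection by surjectivity, and a point of the
   graph of f in it is mapped to a point of the graph of phi \o f in K. *)

Section VerticalMap.
Context {R : realType} (phi : R -> R).

Definition vmap (p : R * R) : R * R := (p.1, phi p.2).

Lemma continuous_vmap : continuous phi -> continuous vmap.
Proof.
move=> cphi p; apply: (@cvg_pair _ _ _ (nbhs p) (nbhs p.1) (nbhs (phi p.2))).
  exact: cvg_fst.
by apply: cvg_comp; [exact: cvg_snd | exact: cphi].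
Qed.

Lemma xproj_preimage_vmap (K : set (R * R)) :
  (forall y, exists x, phi x = y) -> xproj (vmap @^-1` K) = xproj K.
Proof.
move=> surj; apply/seteqP; split=> x [y Ky]; first by exists (phi y).
by have [z zy] := surj y; exists z; rewrite /preimage /vmap /= zy.
Qed.

Lemma graph_preimage_vmap (f : R -> R) (K : set (R * R)) :
  graph f `&` (vmap @^-1` K) !=set0 -> graph (phi \o f) `&` K !=set0.
Proof. by move=> [[x y] [/= yfx Kxy]]; exists (x, phi y); rewrite /graph /= -yfx. Qed.

End VerticalMap.

Theorem proposition4p1 (R : realType) (f phi : R -> R) :
  Jones f -> continuous phi -> (forall y : R, exists x : R, phi x = y) -> Jones (phi \o f).
Proof.
move=> Jf cphi surj K cK ncK.
have closed_pre : closed (vmap phi @^-1` K).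
  by move/continuous_closedP: (continuous_vmap phi cphi); apply.
have uncountable_pre : ~ countable (xproj (vmap phi @^-1` K)).
  by rewrite xproj_preimage_vmap.
exact: graph_preimage_vmap (Jf _ closed_pre uncountable_pre).
Qed.
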